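(* Let $0<\varepsilon_0\le1$ and let $A,B,C$ be $(h_A,k_A)$-, $(h_B,k_B)$-, $(h_C,k_C)$-expansions on $(0,\varepsilon_0]$. With the operations on expansions defined in the context, the following hold as identities of expansions (equal parameters $h,k$, equal coefficients and equal remainders for the two sides): (i) $A+0=A$ where $0$ is the $(h_A,k_A)$-expansion with zero coefficients and zero remainder; $A\cdot1=A$ where $1$ is the $(0,k_A-h_A)$-expansion $1+0\varepsilon+\dots+0\varepsilon^{k_A-h_A}$ with zero remainder; $A+(-1)A=0$ (the $(h_A,k_A)$-expansion of $0$); and, if $A$ is pivotal, $A\cdot A^{-1}=1$ (the $(0,k_A-h_A)$-expansion of $1$), valid on an interval $(0,\varepsilon'_0]$ where $A(\varepsilon)\ne0$; (ii) $A+B=B+A$ and $(A+B)+C=A+(B+C)$; (iii) $A\cdot B=B\cdot A$ and $(A\cdot B)\cdot C=A\cdot(B\cdot C)$; (iv) $(A+B)\cdot C=A\cdot C+B\cdot C$.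
   Context: A $(h,k)$-expansion of a real function $A$ on $(0,\varepsilon_0]$: $A(\varepsilon)=\sum_{l=h}^ka_l\varepsilon^l+o_A(\varepsilon^k)$ with integers $h\le k$, real $a_l$, $o_A(\varepsilon^k)/\varepsilon^k\to0$; pivotal means $a_h\ne0$. Operations (with $\wedge$ = min): Scalar multiple $cA$: $(h_A,k_A)$-expansion with coefficients $ca_l$ and remainder $co_A$. Sum $A+B$: $(h_A\wedge h_B,\,k_A\wedge k_B)$-expansion with coefficients $a_l+b_l$ (missing coefficients below $h_A$ resp. $h_B$ taken as $0$) and remainder $\sum_{k<i\le k_A}a_i\varepsilon^i+\sum_{k<j\le k_B}b_j\varepsilon^j+o_A+o_B$ where $k=k_A\wedge k_B$. Product $A\cdot B$: $(h_A+h_B,\,(k_A+h_B)\wedge(k_B+h_A))$-expansion with coefficients $c_{h_A+h_B+r}=\sum_{0\le i\le r}a_{h_A+i}b_{h_B+r-i}$ and remainder $\sum_{k<i+j}a_ib_j\varepsilon^{i+j}+\sum_ia_i\varepsilon^io_B+\sum_jb_j\varepsilon^jo_A+o_Ao_B$, $k$ being the new upper parameter. Reciprocal $B^{-1}$ of a pivotal $B$ (on an interval where $B\ne0$): $(-h_B,\,k_B-2h_B)$-expansion with $c_{-h_B}=b_{h_B}^{-1}$, $c_{-h_B+r}=-b_{h_B}^{-1}\sum_{1\le i\le r}b_{h_B+i}c_{-h_B+r-i}$, and remainder equal to $B^{-1}$ minus this polynomial. *)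

From HB Require Import structures.
From mathcomp Require Import all_boot all_order all_algebra.
From mathcomp Require Import all_classical all_reals topology normedtype.
Set Implicit Arguments. Unset Strict Implicit. Unset Printing Implicit Defensive.
Import Order.TTheory GRing.Theory Num.Theory.
Import numFieldNormedType.Exports.
Local Open Scope classical_set_scope.
Local Open Scope ring_scope.

(* An (h,k)-expansion: parameters h <= k, coefficients a_l (only l in [h,k]
   are meaningful), and remainder o_A. The represented function is
   A(x) = sum_{l=h}^k a_l x^l + o_A(x). *)
Record expansion (R : realType) := Expansion {
  eh : int; ek : int; ecoef : int -> R; erem : R -> R }.

Section Exp.
Variable R : realType.

Definition psum (h k : int) (a : int -> R) (x : R) : R :=
  \sum_(0 <= i < (absz (k - h)).+1) a (h + i%:Z) * x ^ (h + i%:Z).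

Definition tsum (m n : int) (a : int -> R) (x : R) : R :=
  \sum_(0 <= i < absz (n - m)) a (m + 1 + i%:Z) * x ^ (m + 1 + i%:Z).

Definition epoly (A : expansion R) (x : R) : R := psum (eh A) (ek A) (ecoef A) x.

Definition efun (A : expansion R) (x : R) : R := epoly A x + erem A x.

Definition is_expansion (A : expansion R) : Prop :=
  eh A <= ek A /\ (fun x => erem A x / x ^ ek A) @ 0^'+ --> (0 : R).

Definition pivotal (A : expansion R) : Prop := ecoef A (eh A) != 0.

Definition coefz (A : expansion R) (l : int) : R :=
  if eh A <= l then ecoef A l else 0.

Definition escale (c : R) (A : expansion R) : expansion R :=
  Expansion (eh A) (ek A) (fun l => c * ecoef A l) (fun x => c * erem A x).

Definition eadd (A B : expansion R) : expansion R :=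
  let k := Order.min (ek A) (ek B) in
  Expansion (Order.min (eh A) (eh B)) k
    (fun l => coefz A l + coefz B l)
    (fun x => tsum k (ek A) (coefz A) x + tsum k (ek B) (coefz B) x
              + erem A x + erem B x).

Definition emul (A B : expansion R) : expansion R :=
  let h := eh A + eh B in
  let k := Order.min (ek A + eh B) (ek B + eh A) in
  Expansion h k
    (fun l => \sum_(0 <= i < (absz (l - h)).+1)
                ecoef A (eh A + i%:Z) * ecoef B (l - eh A - i%:Z))
    (fun x =>
       (\sum_(0 <= i < (absz (ek A - eh A)).+1)
          \sum_(0 <= j < (absz (ek B - eh B)).+1 | k < eh A + i%:Z + (eh B + j%:Z))
            ecoef A (eh A + i%:Z) * ecoef B (eh B + j%:Z)
              * x ^ (eh A + i%:Z + (eh B + j%:Z)))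
       + epoly A x * erem B x + epoly B x * erem A x + erem A x * erem B x).

(* coefficients c_{-h}, ..., c_{-h+n} of the reciprocal, given b r = b_{h+r} *)
Fixpoint invseq (b : nat -> R) (n : nat) : seq R :=
  match n with
  | 0 => [:: (b 0%N)^-1]
  | n'.+1 => let s := invseq b n' in
      rcons s (- (b 0%N)^-1 * \sum_(1 <= i < n.+1) b i * nth 0 s (n - i)%N)
  end.

Definition invcoef (b : nat -> R) (r : nat) : R := nth 0 (invseq b r) r.

Definition einv (B : expansion R) : expansion R :=
  let h := - eh B in
  let k := ek B - 2 * eh B in
  let c := fun l : int => invcoef (fun r => ecoef B (eh B + r%:Z)) (absz (l - h)) in
  Expansion h k c (fun x => (efun B x)^-1 - psum h k c x).

Definition ezero (A : expansion R) : expansion R :=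
  Expansion (eh A) (ek A) (fun _ => 0) (fun _ => 0).

Definition eone (A : expansion R) : expansion R :=
  Expansion 0 (ek A - eh A) (fun l => if l == 0 then 1 else 0) (fun _ => 0).

Definition eqexp (e : R) (A B : expansion R) : Prop :=
  [/\ eh A = eh B, ek A = ek B,
      (forall l, eh A <= l <= ek A -> ecoef A l = ecoef B l) &
      (forall x, 0 < x <= e -> erem A x = erem B x)].

End Exp.

(* An expansion is its parameters and coefficients together with a remainder,
   and the remainder is the represented function minus the polynomial part.
   So two expansions with equal parameters and coefficients coincide as soon
   as they represent the same function, and every operation represents the
   corresponding operation on functions; the identities on functions are
   field identities.  The coefficients of a product are the convolution of
   the (shifted) coefficients of the factors, and the ring laws of
   convolution are those of polynomial multiplication after truncation.
   The coefficients of the reciprocal are defined exactly so that their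
   convolution with those of A is 1, 0, 0, ... *)

From HB Require Import structures.
From mathcomp Require Import all_boot all_order all_algebra.
From mathcomp Require Import all_classical all_reals topology normedtype.
From mathcomp Require Import zify ring.
Import Order.TTheory GRing.Theory Num.Theory.
Local Open Scope ring_scope.
Set Implicit Arguments. Unset Strict Implicit. Unset Printing Implicit Defensive.

Section Convolution.
Variable R : comNzRingType.
Implicit Types (a b c : nat -> R) (p q : {poly R}).

Definition conv a b (n : nat) := \sum_(0 <= i < n.+1) a i * b (n - i)%N.

Lemma conv_coefM a b p q n :
  (forall i, (i <= n)%N -> p`_i = a i) -> (forall i, (i <= n)%N -> q`_i = b i) ->
  conv a b n = (p * q)`_n.
Proof.
move=> Ep Eq; rewrite /conv big_mkord coefM; apply: eq_bigr => i _.
by rewrite Ep -1?ltnS // Eq // leq_subr.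
Qed.

Definition trunc_poly a n : {poly R} := \poly_(i < n.+1) a i.

Lemma coef_trunc_poly a n i : (i <= n)%N -> (trunc_poly a n)`_i = a i.
Proof. by rewrite coef_poly ltnS => ->. Qed.

Lemma conv_trunc_poly a b n : conv a b n = (trunc_poly a n * trunc_poly b n)`_n.
Proof. by apply: conv_coefM => i; apply: coef_trunc_poly. Qed.

Lemma convC a b n : conv a b n = conv b a n.
Proof. by rewrite !conv_trunc_poly mulrC. Qed.

Lemma coef_mul_trunc_poly a b n i : (i <= n)%N ->
  (trunc_poly a n * trunc_poly b n)`_i = conv a b i.
Proof.
move=> le_in; symmetry; apply: conv_coefM => j le_ji;
  by apply: coef_trunc_poly; apply: leq_trans le_in.
Qed.

Lemma convA a b c n : conv (conv a b) c n = conv a (conv b c) n.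
Proof.
rewrite (@conv_coefM _ _ (trunc_poly a n * trunc_poly b n) (trunc_poly c n)); last 2 first.
- exact: coef_mul_trunc_poly.
- exact: coef_trunc_poly.
rewrite (@conv_coefM _ _ (trunc_poly a n) (trunc_poly b n * trunc_poly c n)) ?mulrA //.
- exact: coef_trunc_poly.
- exact: coef_mul_trunc_poly.
Qed.

Lemma convDl a a' b n : conv (a \+ a') b n = conv a b n + conv a' b n.
Proof. by rewrite /conv -big_split; apply: eq_bigr => i _; rewrite mulrDl. Qed.

Lemma eq_conv a a' b b' n :
  (forall i, (i <= n)%N -> a i = a' i) -> (forall i, (i <= n)%N -> b i = b' i) ->
  conv a b n = conv a' b' n.
Proof.
move=> Ea Eb; rewrite conv_trunc_poly; symmetry; apply: conv_coefM => i le_in;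
  by rewrite coef_trunc_poly // (Ea, Eb).
Qed.

End Convolution.

Lemma sum_nat_triangle (V : nmodType) n (F : nat -> nat -> V) :
  \sum_(0 <= l < n.+1) \sum_(0 <= i < l.+1) F l i =
  \sum_(0 <= i < n.+1) \sum_(i <= l < n.+1) F l i.
Proof.
transitivity (\sum_(0 <= l < n.+1) \sum_(0 <= i < n.+1)
                 (if (i <= l)%N then F l i else 0)).
  apply: eq_big_nat => l /andP[_ le_ln].
  rewrite (big_nat_widen _ _ _ _ _ le_ln) big_mkcond.
  by apply: eq_bigr => i _; rewrite ltnS.
rewrite exchange_big_nat; apply: eq_big_nat => i /andP[_ le_in].
by rewrite (big_nat_widenl _ _ _ _ _ (leq0n i)) big_mkcond.
Qed.

Lemma sum_antidiagonal (V : nmodType) nX nY N (P : nat -> nat -> bool)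
    (T : nat -> nat -> V) :
  (N <= nX)%N -> (N <= nY)%N ->
  (forall i j, (i <= nX)%N -> (j <= nY)%N -> P i j = (i + j <= N)%N) ->
  \sum_(0 <= i < nX.+1) \sum_(0 <= j < nY.+1 | P i j) T i j =
  \sum_(0 <= l < N.+1) \sum_(0 <= i < l.+1) T i (l - i)%N.
Proof.
move=> le_NX le_NY EP; rewrite (sum_nat_triangle N (fun l i => T i (l - i)%N)).
rewrite (@big_cat_nat _ _ _ N.+1) //=.
rewrite [X in _ + X]big_nat_cond [X in _ + X]big1 ?addr0; last first.
  move=> i /andP[/andP[lt_Ni lt_iX] _]; rewrite big_nat_cond big_pred0 // => j.
  by apply/negbTE/andP => -[/andP[_ lt_jY]]; rewrite EP; lia.
apply: eq_big_nat => i /andP[_ lt_iN].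
rewrite -[in RHS](add0n i) big_addn.
rewrite (@big_nat_widen _ _ _ _ (N.+1 - i) nY.+1); last by lia.
rewrite big_nat_cond [RHS]big_nat_cond.
apply: eq_big => [j|j _]; last by congr (T i _); lia.
by case: (ltnP j nY.+1) => lt_jY; rewrite /= ?andbF //= EP; lia.
Qed.

Section Expansions.
Variable R : realType.
Implicit Types (X Y Z : expansion R) (f g : int -> R) (x : R) (h k m n p l : int).

Lemma tsum_cat m n p f x : m <= n -> n <= p ->
  tsum m n f x + tsum n p f x = tsum m p f x.
Proof.
move=> le_mn le_np; rewrite /tsum.
have -> : absz (p - m)%R = (absz (n - m)%R + absz (p - n)%R)%N by lia.
rewrite [RHS](@big_cat_nat _ _ _ (absz (n - m))) ?leq_addr //=; congr (_ + _).
rewrite (big_addn 0 _ (absz (n - m))) addKn; apply: eq_bigr => i _.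
by congr (f _ * x ^ _); lia.
Qed.

Lemma psum_tsum h k f x : h <= k -> psum h k f x = tsum (h - 1) k f x.
Proof.
move=> le_hk; rewrite /psum /tsum.
have -> : absz (k - (h - 1))%R = (absz (k - h)%R).+1 by lia.
by apply: eq_bigr => i _; congr (f _ * x ^ _); lia.
Qed.

Lemma eq_psum h k f g x : h <= k -> (forall l, h <= l <= k -> f l = g l) ->
  psum h k f x = psum h k g x.
Proof.
move=> le_hk Efg; apply: eq_big_nat => i /andP[_ lt_i].
by rewrite Efg //; apply/andP; split; lia.
Qed.

Lemma eq_tsum m n f g x : m <= n -> (forall l, m < l <= n -> f l = g l) ->
  tsum m n f x = tsum m n g x.
Proof.
move=> le_mn Efg; apply: eq_big_nat => i /andP[_ lt_i].
by rewrite Efg //; apply/andP; split; lia.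
Qed.

Lemma tsum_eq0 m n f x : m <= n -> (forall l, m < l <= n -> f l = 0) -> tsum m n f x = 0.
Proof.
by move=> le_mn f0; rewrite (@eq_tsum _ _ _ (fun=> 0)) // /tsum big1 // => i _; rewrite mul0r.
Qed.

Lemma psumD h k f g x :
  psum h k (fun l => f l + g l) x = psum h k f x + psum h k g x.
Proof. by rewrite /psum -big_split; apply: eq_bigr => i _; rewrite mulrDl. Qed.

Lemma psum_coefz_tsum Z h k x : eh Z <= ek Z ->
  h <= eh Z -> h <= k -> k <= ek Z ->
  psum h k (coefz Z) x + tsum k (ek Z) (coefz Z) x = epoly Z x.
Proof.
move=> le_Z le_h le_hk le_k; rewrite psum_tsum // tsum_cat //; last lia.
rewrite /epoly psum_tsum // -(@tsum_cat (h - 1) (eh Z - 1)); [|lia|lia].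
have -> : tsum (h - 1) (eh Z - 1) (coefz Z) x = 0.
  by apply: tsum_eq0 => [|l lt_l]; [lia | rewrite /coefz ifF //; lia].
rewrite add0r.
by apply: eq_tsum => [|l lt_l]; [lia | rewrite /coefz ifT //; lia].
Qed.

Lemma efun_eadd X Y x : eh X <= ek X -> eh Y <= ek Y ->
  efun (eadd X Y) x = efun X x + efun Y x.
Proof.
move=> le_X le_Y; rewrite /efun {1}/epoly /= psumD.
rewrite -(@psum_coefz_tsum X (Order.min (eh X) (eh Y)) (Order.min (ek X) (ek Y)));
  try lia.
rewrite -(@psum_coefz_tsum Y (Order.min (eh X) (eh Y)) (Order.min (ek X) (ek Y)));
  try lia.
ring.
Qed.

Definition scoef X (r : nat) := ecoef X (eh X + r%:Z).

Lemma ecoef_emul X Y l (n : nat) : l = eh X + eh Y + n%:Z ->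
  ecoef (emul X Y) l = conv (scoef X) (scoef Y) n.
Proof.
move=> ->; rewrite /= /conv /scoef.
have -> : absz (eh X + eh Y + n%:Z - (eh X + eh Y))%R = n by lia.
by apply: eq_big_nat => i /andP[_ lt_in]; congr (_ * ecoef Y _); lia.
Qed.

(* The double sum is the part of the product above degree k, which emul puts
   into the remainder. *)
Lemma epoly_emul X Y x : eh X <= ek X -> eh Y <= ek Y -> x != 0 ->
  epoly (emul X Y) x +
  (\sum_(0 <= i < (absz (ek X - eh X)).+1)
     \sum_(0 <= j < (absz (ek Y - eh Y)).+1 |
           Order.min (ek X + eh Y) (ek Y + eh X) < eh X + i%:Z + (eh Y + j%:Z))
        ecoef X (eh X + i%:Z) * ecoef Y (eh Y + j%:Z)
          * x ^ (eh X + i%:Z + (eh Y + j%:Z)))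
  = epoly X x * epoly Y x.
Proof.
move=> le_X le_Y x0; set k := Order.min _ _.
rewrite /epoly /psum big_distrlr /=.
under [RHS]eq_bigr => i _ do under eq_bigr => j _ do rewrite mulrACA -expfzDr //.
under [RHS]eq_bigr => i _ do rewrite (bigID (fun j => k < eh X + i%:Z + (eh Y + j%:Z))) /=.
rewrite big_split /= [RHS]addrC; congr (_ + _).
rewrite (@sum_antidiagonal _ _ _ (absz (k - (eh X + eh Y))%R));
  [| lia | lia | by move=> i j lt_i lt_j; apply/idP/idP; lia].
apply: eq_big_nat => l /andP[_ lt_l]; rewrite big_distrl /=.
have -> : absz (eh X + eh Y + l%:Z - (eh X + eh Y))%R = l by lia.
by apply: eq_big_nat => i /andP[_ lt_il]; congr (_ * ecoef Y _ * x ^ _); lia.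
Qed.

Lemma efun_emul X Y x : eh X <= ek X -> eh Y <= ek Y -> x != 0 ->
  efun (emul X Y) x = efun X x * efun Y x.
Proof.
move=> le_X le_Y x0; have := epoly_emul le_X le_Y x0.
rewrite /efun mulrDl !mulrDr /= => <-; ring.
Qed.

Lemma coefz_eadd X Y l : coefz (eadd X Y) l = coefz X l + coefz Y l.
Proof.
by rewrite /coefz /= /coefz; do 3 case: ifP => ?; rewrite ?addr0 ?add0r //; lia.
Qed.

Lemma conv_coefz X Y h (n : nat) : h <= eh X ->
  conv (fun i => coefz X (h + i%:Z)) (scoef Y) n = coefz (emul X Y) (h + eh Y + n%:Z).
Proof.
move=> le_h; rewrite [in RHS]/coefz [eh (emul X Y)]/=.
case: leP => le_hn; last first.
  rewrite /conv big_nat_cond big1 // => i /andP[/andP[_ lt_in] _].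
  by rewrite /coefz ifF ?mul0r //; lia.
set d := absz (eh X - h).
rewrite (@ecoef_emul _ _ _ (n - d)%N); last by lia.
rewrite /conv (@big_cat_nat _ _ _ d) //=; last by lia.
rewrite big_nat_cond big1 ?add0r => [|i /andP[/andP[_ lt_id] _]]; last first.
  by rewrite /coefz ifF ?mul0r //; lia.
rewrite (big_addn 0 _ d).
have -> : (n.+1 - d = (n - d).+1)%N by lia.
apply: eq_big_nat => i /andP[_ lt_i]; rewrite /coefz ifT; last by lia.
by rewrite /scoef; congr (ecoef X _ * ecoef Y _); lia.
Qed.

Lemma efun_ezero X x : efun (ezero X) x = 0.
Proof. by rewrite /efun /epoly /psum big1 ?addr0 // => i _; rewrite mul0r. Qed.

Lemma efun_eone X x : efun (eone X) x = 1.
Proof.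
rewrite /efun /epoly /psum /= big_nat_recl // big1 ?addr0 => [|i _].
  by rewrite eqxx mul1r expr0z.
by rewrite mul0r.
Qed.

Lemma efun_escale c X x : efun (escale c X) x = c * efun X x.
Proof.
rewrite /efun /epoly /psum /= mulrDr big_distrr /=; congr (_ + _).
by apply: eq_bigr => i _; rewrite mulrA.
Qed.

Lemma efun_einv X x : efun (einv X) x = (efun X x)^-1.
Proof. by rewrite /efun /epoly /= addrC subrK. Qed.

Lemma eqexp_efun e X Y : eh X <= ek X -> eh X = eh Y -> ek X = ek Y ->
  (forall l, eh X <= l <= ek X -> ecoef X l = ecoef Y l) ->
  (forall x, 0 < x <= e -> efun X x = efun Y x) -> eqexp e X Y.
Proof.
move=> le_X eq_h eq_k eq_coef eq_fun; split => // x x_in.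
have eq_poly : epoly X x = epoly Y x by rewrite /epoly -eq_h -eq_k; apply: eq_psum.
by apply: (addrI (epoly X x)); rewrite {2}eq_poly; apply: eq_fun.
Qed.

Lemma int_ge_shift h (P : int -> Prop) :
  (forall n : nat, P (h + n%:Z)) -> forall l, h <= l -> P l.
Proof. by move=> Ph l le_hl; have -> : l = h + (absz (l - h))%:Z by lia. Qed.

Lemma size_invseq (b : nat -> R) (n : nat) : size (invseq b n) = n.+1.
Proof. by elim: n => [|n IHn] //=; rewrite size_rcons IHn. Qed.

Lemma nth_invseq (b : nat -> R) (n r : nat) : (r <= n)%N -> nth 0 (invseq b n) r = invcoef b r.
Proof.
elim: n => [|n IHn] le_rn; first by move: le_rn; rewrite leqn0 => /eqP ->.
rewrite /= nth_rcons size_invseq; case: ltnP => [lt_rn|le_nr]; first exact: IHn.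
have -> : r = n.+1 by lia.
by rewrite eqxx /invcoef /= nth_rcons size_invseq ltnn eqxx.
Qed.

Lemma conv_invcoef (b : nat -> R) (n : nat) : b 0%N != 0 ->
  conv b (invcoef b) n = (n == 0%N)%:R.
Proof.
move=> b0; case: n => [|n]; first by rewrite /conv big_nat1 /invcoef /= mulfV.
rewrite /conv big_nat_recl //= subn0.
rewrite {1}/invcoef /= nth_rcons size_invseq ltnn eqxx.
rewrite big_add1 /=.
under eq_big_nat => i /andP[_ lt_in] do rewrite nth_invseq ?subSS ?leq_subr //.
by rewrite mulrA mulrN mulfV // mulN1r addNr.
Qed.

Lemma eadd0 e X : eh X <= ek X -> eqexp e (eadd X (ezero X)) X.
Proof.
move=> le_X; apply: eqexp_efun => /=; try lia.
- move=> l /andP[le_l _]; rewrite /coefz /=.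
  have {le_l}-> : eh X <= l by lia.
  by rewrite addr0.
- by move=> x _; rewrite efun_eadd // efun_ezero addr0.
Qed.

Lemma eaddN e X : eh X <= ek X -> eqexp e (eadd X (escale (-1) X)) (ezero X).
Proof.
move=> le_X; apply: eqexp_efun => /=; try lia.
- by move=> l _; rewrite /coefz /=; case: ifP; rewrite ?mulN1r ?addrN ?addr0.
- by move=> x _; rewrite efun_eadd // efun_escale efun_ezero mulN1r addrN.
Qed.

Lemma eaddC e X Y : eh X <= ek X -> eh Y <= ek Y -> eqexp e (eadd X Y) (eadd Y X).
Proof.
move=> le_X le_Y; apply: eqexp_efun => /=; try lia.
- by move=> l _; rewrite addrC.
- by move=> x _; rewrite !efun_eadd // addrC.
Qed.

Lemma eaddA e X Y Z : eh X <= ek X -> eh Y <= ek Y -> eh Z <= ek Z ->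
  eqexp e (eadd (eadd X Y) Z) (eadd X (eadd Y Z)).
Proof.
move=> le_X le_Y le_Z; apply: eqexp_efun => /=; try lia.
- by move=> l _; rewrite !coefz_eadd addrA.
- by move=> x _; rewrite !efun_eadd ?addrA //=; lia.
Qed.

Lemma emul1 e X : eh X <= ek X -> eqexp e (emul X (eone X)) X.
Proof.
move=> le_X; have le_1 : eh (eone X) <= ek (eone X) by rewrite /=; lia.
apply: eqexp_efun; try (rewrite /=; lia).
- move=> l /andP[le_l _]; have {}le_l : eh X <= l by move: le_l => /=; lia.
  move: l le_l; apply: int_ge_shift => n; rewrite (@ecoef_emul _ _ _ n) ?addr0 // convC.
  rewrite /conv big_nat_recl // big1 ?addr0 => [|i _]; last by rewrite /scoef mul0r.
  by rewrite /scoef /= mul1r subn0.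
- by move=> x /andP[x_gt0 _]; rewrite efun_emul ?gt_eqF // efun_eone mulr1.
Qed.

Lemma emulV e X : eh X <= ek X -> pivotal X ->
  (forall x, 0 < x <= e -> efun X x != 0) -> eqexp e (emul X (einv X)) (eone X).
Proof.
move=> le_X piv X_neq0; have le_inv : eh (einv X) <= ek (einv X) by rewrite /=; lia.
apply: eqexp_efun; try (rewrite /=; lia).
- move=> l /andP[le_l _]; have {}le_l : 0 <= l by move: le_l => /=; lia.
  move: l le_l; apply: int_ge_shift => n; rewrite (@ecoef_emul _ _ _ n) /=; last by lia.
  rewrite (@eq_conv _ _ (scoef X) _ (invcoef (scoef X))) // => [|i _].
    by rewrite conv_invcoef ?add0r /scoef ?addr0 //; case: n.
  by rewrite /scoef [LHS]/=; congr (invcoef _ _); lia.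
- move=> x /[dup] x_in /andP[x_gt0 _].
  by rewrite efun_emul ?gt_eqF // efun_einv efun_eone mulfV // X_neq0.
Qed.

Lemma emulC e X Y : eh X <= ek X -> eh Y <= ek Y -> eqexp e (emul X Y) (emul Y X).
Proof.
move=> le_X le_Y; apply: eqexp_efun; try (rewrite /=; lia).
- move=> l /andP[le_l _]; move: l le_l; apply: int_ge_shift => n.
  rewrite (@ecoef_emul _ _ _ n) // (@ecoef_emul _ _ _ n) 1?convC //=; lia.
- by move=> x /andP[x_gt0 _]; rewrite !efun_emul ?gt_eqF // mulrC.
Qed.

Lemma emulA e X Y Z : eh X <= ek X -> eh Y <= ek Y -> eh Z <= ek Z ->
  eqexp e (emul (emul X Y) Z) (emul X (emul Y Z)).
Proof.
move=> le_X le_Y le_Z; apply: eqexp_efun; try (rewrite /=; lia).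
- move=> l /andP[le_l _]; move: l le_l; apply: int_ge_shift => n.
  rewrite (@ecoef_emul _ _ _ n) // (@ecoef_emul _ _ _ n) /=; last by lia.
  rewrite (@eq_conv _ _ (conv (scoef X) (scoef Y)) _ (scoef Z)) // => [|i _]; last first.
    exact: ecoef_emul.
  rewrite convA; apply: eq_conv => // j _.
  by rewrite /scoef (@ecoef_emul _ _ _ j) //=; lia.
- move=> x /andP[x_gt0 _].
  by rewrite !efun_emul ?mulrA ?gt_eqF //=; lia.
Qed.

Lemma emulDl e X Y Z : eh X <= ek X -> eh Y <= ek Y -> eh Z <= ek Z ->
  eqexp e (emul (eadd X Y) Z) (eadd (emul X Z) (emul Y Z)).
Proof.
move=> le_X le_Y le_Z; apply: eqexp_efun; try (rewrite /=; lia).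
- move=> l /andP[le_l _]; move: l le_l; apply: int_ge_shift => n.
  rewrite (@ecoef_emul _ _ _ n) // /scoef /= convDl.
  by rewrite !conv_coefz //; lia.
- move=> x /andP[x_gt0 _].
  rewrite efun_emul ?gt_eqF //=; last lia.
  by rewrite !efun_eadd /= ?efun_emul ?gt_eqF // ?mulrDl //; lia.
Qed.

End Expansions.

Unset Implicit Arguments.

Theorem lemma4 (R : realType) (eps0 : R) (A B C : expansion R) :
  0 < eps0 <= 1 ->
  is_expansion A -> is_expansion B -> is_expansion C ->
  (* (i) *)
  [/\ eqexp eps0 (eadd A (ezero A)) A,
      eqexp eps0 (emul A (eone A)) A,
      eqexp eps0 (eadd A (escale (-1) A)) (ezero A) &
      (pivotal A -> forall eps0' : R, 0 < eps0' <= eps0 ->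
         (forall x, 0 < x <= eps0' -> efun A x != 0) ->
         eqexp eps0' (emul A (einv A)) (eone A))] /\
  (* (ii) *)
  (eqexp eps0 (eadd A B) (eadd B A) /\
   eqexp eps0 (eadd (eadd A B) C) (eadd A (eadd B C))) /\
  (* (iii) *)
  (eqexp eps0 (emul A B) (emul B A) /\
   eqexp eps0 (emul (emul A B) C) (emul A (emul B C))) /\
  (* (iv) *)
  eqexp eps0 (emul (eadd A B) C) (eadd (emul A C) (emul B C)).
Proof.
(* The identities hold on every interval. *)
move=> _ [le_A _] [le_B _] [le_C _].
split; first by split; [exact: eadd0 | exact: emul1 | exact: eaddN
                       | by move=> piv e _; apply: emulV].
split; first by split; [exact: eaddC | exact: eaddA].
split; first by split; [exact: emulC | exact: emulA].
exact: emulDl.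
Qed.
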